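(* For every non-self-intersecting 4-periodic of the elliptic billiard, the product of its area $A$ and the area $A'$ of its outer polygon is $$A\,A'=8a^2b^2.$$
   Context: The elliptic billiard is $\mathcal{E}: x^2/a^2+y^2/b^2=1$, $a>b>0$. A non-self-intersecting 4-periodic is a quadrilateral $P_1P_2P_3P_4$ inscribed in $\mathcal{E}$ which is a closed billiard trajectory (at each vertex the normal to $\mathcal{E}$ bisects the angle between the two incident sides) with confocal elliptic caustic $x^2/a''^2+y^2/b''^2=1$, $a''=a^2/\sqrt{a^2+b^2}$, $b''=b^2/\sqrt{a^2+b^2}$; explicitly, for $P_1=(x_1,y_1)\in\mathcal{E}$: $P_2=\left(-\frac{a^4y_1}{\sqrt{b^6x_1^2+a^6y_1^2}},\frac{b^4x_1}{\sqrt{b^6x_1^2+a^6y_1^2}}\right)$, $P_3=-P_1$, $P_4=-P_2$. The outer polygon is the quadrilateral whose sides lie on the tangent lines to $\mathcal{E}$ at $P_1,\dots,P_4$ (vertex $P_i'$ is the intersection of the tangents at $P_i$ and $P_{i+1}$). *)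

From mathcomp Require Import all_boot all_order all_algebra.
Set Implicit Arguments. Unset Strict Implicit. Unset Printing Implicit Defensive.
Import Order.TTheory GRing.Theory Num.Theory.
Local Open Scope ring_scope.

Section Billiard.
Variable R : rcfType.
Implicit Types (a b : R) (P Q : R * R).

Definition on_ellipse a b P : Prop := P.1 ^+ 2 / a ^+ 2 + P.2 ^+ 2 / b ^+ 2 = 1.

(* second vertex of the non-self-intersecting 4-periodic starting at P1
   (explicit formula of the paper) *)
Definition per4_P2 a b P : R * R :=
  let d := Num.sqrt (b ^+ 6 * P.1 ^+ 2 + a ^+ 6 * P.2 ^+ 2) in
  (- (a ^+ 4 * P.2) / d, b ^+ 4 * P.1 / d).

Definition opp_pt P : R * R := (- P.1, - P.2).

Definition on_tangent a b P Q : Prop :=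
  Q.1 * P.1 / a ^+ 2 + Q.2 * P.2 / b ^+ 2 = 1.

Definition area4 (V1 V2 V3 V4 : R * R) : R :=
  `| (V1.1 * V2.2 - V2.1 * V1.2) + (V2.1 * V3.2 - V3.1 * V2.2)
   + (V3.1 * V4.2 - V4.1 * V3.2) + (V4.1 * V1.2 - V1.1 * V4.2) | / 2.

End Billiard.

From mathcomp Require Import all_boot all_order all_algebra.
From mathcomp Require Import ring lra.
Set Implicit Arguments. Unset Strict Implicit. Unset Printing Implicit Defensive.
Import Order.TTheory GRing.Theory Num.Theory.
Local Open Scope ring_scope.

(* Write [U × V] for the cross product U.1 V.2 - V.1 U.2.
   The billiard 4-periodic is the parallelogram P1 P2 (-P1) (-P2), whose
   shoelace area is 2 |P1 × P2|.  Its outer polygon is bounded by the tangents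
   (polars) at the P_i; the tangents at two points U, V with U × V <> 0 meet
   at the pole  (a^2 (V.2 - U.2), b^2 (U.1 - V.1)) / (U × V).  Since the
   vertices come in opposite pairs, so do these poles: the outer polygon is
   the parallelogram Q1 Q2 (-Q1) (-Q2), of area 2 |Q1 × Q2|, and a direct
   computation gives Q1 × Q2 = 2 a^2 b^2 / (P1 × P2).  Hence the product of
   the areas is 8 a^2 b^2, for every inscribed parallelogram with
   P1 × P2 <> 0.  The only fact specific to the 4-periodic is that
   P1 × P2 > 0 for the explicit second vertex of the paper. *)

Section PolarParallelogram.
Variable R : rcfType.
Implicit Types (a b : R) (U V Q : R * R).

Definition cross U V : R := U.1 * V.2 - V.1 * U.2.

(* the intersection point of the tangents (polars) at U and V *)
Definition pole a b U V : R * R :=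
  (a ^+ 2 * (V.2 - U.2) / cross U V, b ^+ 2 * (U.1 - V.1) / cross U V).

Lemma opp_ptK : involutive (@opp_pt R).
Proof. by case=> x y; rewrite /opp_pt /= !opprK. Qed.

Lemma cross_opp U V : cross (opp_pt U) (opp_pt V) = cross U V.
Proof. by rewrite /cross /=; ring. Qed.

(* reflecting U and swapping U, V also preserves the cross product; this
   relates consecutive sides of a centrally symmetric quadrilateral *)
Lemma cross_oppr U V : cross V (opp_pt U) = cross U V.
Proof. by rewrite /cross /=; ring. Qed.

(* The pole of U, V is the unique point on both tangents: the tangent
   equations form a linear system of determinant (U × V) / (a^2 b^2). *)
Lemma polar_intersection a b U V Q : a != 0 -> b != 0 -> cross U V != 0 ->
  on_tangent a b U Q -> on_tangent a b V Q -> Q = pole a b U V.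
Proof.
case: U V Q => [u1 u2] [v1 v2] [q1 q2] an bn D0; rewrite /on_tangent /=.
have a2n : a ^+ 2 != 0 by rewrite expf_neq0.
have b2n : b ^+ 2 != 0 by rewrite expf_neq0.
move=> tU tV; rewrite /pole /=; congr pair; apply: (mulIf D0); rewrite divfK //.
- have -> : q1 * cross (u1, u2) (v1, v2)
      = a ^+ 2 * (v2 * (q1 * u1 / a ^+ 2 + q2 * u2 / b ^+ 2)
                  - u2 * (q1 * v1 / a ^+ 2 + q2 * v2 / b ^+ 2)).
    by rewrite /cross /=; field; rewrite ?an ?bn ?a2n ?b2n.
  by rewrite tU tV !mulr1.
- have -> : q2 * cross (u1, u2) (v1, v2)
      = b ^+ 2 * (u1 * (q1 * v1 / a ^+ 2 + q2 * v2 / b ^+ 2)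
                  - v1 * (q1 * u1 / a ^+ 2 + q2 * u2 / b ^+ 2)).
    by rewrite /cross /=; field; rewrite ?an ?bn ?a2n ?b2n.
  by rewrite tU tV !mulr1.
Qed.

(* poles of opposite points are opposite: the outer polygon of a centrally
   symmetric quadrilateral is centrally symmetric *)
Lemma pole_opp a b U V : pole a b (opp_pt U) (opp_pt V) = opp_pt (pole a b U V).
Proof. by rewrite /pole cross_opp /opp_pt /=; congr pair; ring. Qed.

Lemma area4_parallelogram U V :
  area4 U V (opp_pt U) (opp_pt V) = 2 * `|cross U V|.
Proof.
rewrite /area4 /opp_pt /=.
have -> : U.1 * V.2 - V.1 * U.2 + (V.1 * - U.2 - - U.1 * V.2)
          + (- U.1 * - V.2 - - V.1 * - U.2) + (- V.1 * U.2 - U.1 * - V.2)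
          = 4 * cross U V by rewrite /cross; ring.
by rewrite normrM ger0_norm // mulrC mulrA; field.
Qed.

Lemma cross_consecutive_poles a b U V : cross U V != 0 ->
  cross (pole a b U V) (pole a b V (opp_pt U)) = 2 * a ^+ 2 * b ^+ 2 / cross U V.
Proof.
case: U V => [u1 u2] [v1 v2]; rewrite /pole cross_oppr /=.
set D := cross _ _ => D0.
rewrite /cross /=.
transitivity (a ^+ 2 * b ^+ 2 * (2 * (u1 * v2 - v1 * u2)) / D / D); first by ring.
by rewrite -/(cross (u1, u2) (v1, v2)) -/D; field.
Qed.

Lemma area_product_parallelogram a b U V : cross U V != 0 ->
  area4 U V (opp_pt U) (opp_pt V)
  * area4 (pole a b U V) (pole a b V (opp_pt U))
          (opp_pt (pole a b U V)) (opp_pt (pole a b V (opp_pt U)))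
  = 8 * a ^+ 2 * b ^+ 2.
Proof.
move=> D0; rewrite !area4_parallelogram cross_consecutive_poles //.
have ab_ge0 : 0 <= 2 * a ^+ 2 * b ^+ 2 by rewrite mulr_ge0 ?sqr_ge0 // mulr_ge0 ?sqr_ge0.
rewrite normrM normfV (ger0_norm ab_ge0).
have nD0 : `|cross U V| != 0 by rewrite normr_eq0.
by field.
Qed.

End PolarParallelogram.

(* For the second vertex of the 4-periodic, P1 × P2 = (b^4 x^2 + a^4 y^2) / d
   with d = sqrt (b^6 x^2 + a^6 y^2): it is positive since P1 <> 0. *)
Lemma per4_cross_gt0 (R : rcfType) (a b : R) (P : R * R) :
  0 < a -> 0 < b -> on_ellipse a b P -> 0 < cross P (per4_P2 a b P).
Proof.
case: P => x y a0 b0; rewrite /on_ellipse /per4_P2 /cross /= => onE.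
have xy_gt0 : 0 < x ^+ 2 + y ^+ 2.
  rewrite lt0r addr_ge0 ?sqr_ge0 // andbT paddr_eq0 ?sqr_ge0 // !sqrf_eq0.
  apply/negP => /andP[/eqP x0 /eqP y0]; move: onE.
  by rewrite x0 y0 expr0n /= !mul0r addr0 => /eqP; rewrite eq_sym oner_eq0.
have sum_gt0 (n : nat) : 0 < b ^+ n * x ^+ 2 + a ^+ n * y ^+ 2.
  have := exprn_gt0 n a0; have := exprn_gt0 n b0.
  have := sqr_ge0 x; have := sqr_ge0 y; move: xy_gt0.
  move: (x ^+ 2) (y ^+ 2) (a ^+ n) (b ^+ n) => X Y A B XY Y0 X0 B0 A0.
  by move: X0; rewrite le0r => /predU1P[X0|X_gt0]; nra.
set d := Num.sqrt _.
have d_gt0 : 0 < d by rewrite sqrtr_gt0.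
have -> : x * (b ^+ 4 * x / d) - - (a ^+ 4 * y) / d * y
          = (b ^+ 4 * x ^+ 2 + a ^+ 4 * y ^+ 2) / d.
  by field; rewrite gt_eqF.
by rewrite divr_gt0.
Qed.

Theorem mainTheorem13 (R : rcfType) (a b : R) (P1 Q1 Q2 Q3 Q4 : R * R) :
  0 < b -> b < a ->
  on_ellipse a b P1 ->
  let P2 := per4_P2 a b P1 in
  let P3 := opp_pt P1 in
  let P4 := opp_pt P2 in
  (* Q_i is the vertex P_i' of the outer polygon: intersection of the
     tangents at P_i and P_{i+1} *)
  on_tangent a b P1 Q1 -> on_tangent a b P2 Q1 ->
  on_tangent a b P2 Q2 -> on_tangent a b P3 Q2 ->
  on_tangent a b P3 Q3 -> on_tangent a b P4 Q3 ->
  on_tangent a b P4 Q4 -> on_tangent a b P1 Q4 ->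
  area4 P1 P2 P3 P4 * area4 Q1 Q2 Q3 Q4 = 8 * a ^+ 2 * b ^+ 2.
Proof.
move=> b0 ba hE P2 P3 P4 t1 t2 t3 t4 t5 t6 t7 t8.
have a0 : 0 < a by lra.
have [an bn] : a != 0 /\ b != 0 by rewrite !gt_eqF.
have D0 : cross P1 P2 != 0 by rewrite gt_eqF // per4_cross_gt0.
have -> : Q1 = pole a b P1 P2 by exact: polar_intersection.
have -> : Q2 = pole a b P2 P3.
  by apply: polar_intersection; rewrite ?cross_oppr.
have -> : Q3 = opp_pt (pole a b P1 P2).
  by rewrite -pole_opp; apply: polar_intersection; rewrite ?cross_opp.
have -> : Q4 = opp_pt (pole a b P2 P3).
  rewrite -pole_opp opp_ptK; move: t8; rewrite -[P1]opp_ptK => t8.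
  by apply: polar_intersection; rewrite ?cross_opp ?cross_oppr.
exact: area_product_parallelogram.
Qed.
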